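(* Let $\mathcal{M}$ be a finite set of at least two pairwise distinct finite state machines with outputs, all over the same input alphabet $\Sigma$ and output alphabet $\Gamma$, and let $M_{\mathrm{trg}} \in \mathcal{M}$ be a target machine. Let $V$ be a verifier for the Remote Software Identification problem (defined in the context) which is RSI-correct and RSI-$\varepsilon_0$-sound. Then there exists a verifier $V'$ which is likewise RSI-correct and RSI-$\varepsilon_0$-sound and which behaves exactly like $V$ except that it never submits to the challenge machine any non-distinguishing sequence that $V$ would submit; i.e., every input sequence that $V'$ sends to the challenge machine lies in $\mathsf{DS}(\mathcal{M})$.
   Context: A finite state machine with outputs (FSM) is a tuple $M=(\mathcal{Z}, z_0, \Sigma, \Gamma, \delta, \omega)$ with state set $\mathcal{Z}$, start state $z_0\in\mathcal{Z}$, finite input alphabet $\Sigma$, finite output alphabet $\Gamma$, transition function $\delta:\mathcal{Z}\times\Sigma\to\mathcal{Z}$ and output function $\omega:\mathcal{Z}\times\Sigma\to\Gamma$. For a state $z$ and a sequence $\vec\sigma=(\sigma_1,\dots,\sigma_n)\in\Sigma^n$, $\omega(z,\vec\sigma)=(\gamma_1,\dots,\gamma_n)$ where $z_1=z$, $z_{i+1}=\delta(z_i,\sigma_i)$ and $\gamma_j=\omega(z_j,\sigma_j)$; write $\omega_M(\vec\sigma):=\omega_M(z_0,\vec\sigma)$ for the output function of $M$ started in its start state. A sequence $\vec\sigma\in\Sigma^*$ is a distinguishing sequence with respect to $\mathcal{M}$ if there exist $M,M'\in\mathcal{M}$ with $\omega_M(\vec\sigma)\neq\omega_{M'}(\vec\sigma)$;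 $\mathsf{DS}(\mathcal{M})\subseteq\Sigma^*$ denotes the set of all distinguishing sequences, and a sequence not in $\mathsf{DS}(\mathcal{M})$ is called non-distinguishing. Remote Software Identification (RSI) setting: a prover selects a source machine $M_{\mathrm{src}}\in\mathcal{M}$ and gives the verifier remote access to a challenge machine $M_{\mathrm{chl}}$, here with $M_{\mathrm{chl}}=M_{\mathrm{src}}$. The verifier knows the full specifications of all machines in $\mathcal{M}$ (and $M_{\mathrm{trg}}$), but can interact with $M_{\mathrm{chl}}$ only by sending input sequences $\vec\sigma\in\Sigma^*$ and receiving the corresponding outputs, and may reset $M_{\mathrm{chl}}$ to its start state. At the end the verifier outputs a decision $d\in\{\texttt{true},\texttt{false}\}$. The verifier is RSI-correct if $\Pr[d=\texttt{true}\mid M_{\mathrm{src}}=M_{\mathrm{trg}}]=1$, and RSI-$\varepsilon_0$-sound if $\Pr[d=\texttt{true}\mid M_{\mathrm{src}}\neq M_{\mathrm{trg}}]\le\varepsilon_0$. *)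

From mathcomp Require Import all_boot all_order all_algebra.
From mathcomp Require Import reals.
Set Implicit Arguments. Unset Strict Implicit. Unset Printing Implicit Defensive.
Import Order.TTheory GRing.Theory Num.Theory.
Local Open Scope ring_scope.

Record fsm (Sigma Gamma : finType) := FSM {
  fsm_state : finType;
  fsm_start : fsm_state;
  fsm_delta : fsm_state -> Sigma -> fsm_state;
  fsm_out   : fsm_state -> Sigma -> Gamma }.

Fixpoint out_from (Sigma Gamma : finType) (M : fsm Sigma Gamma)
    (z : fsm_state M) (s : seq Sigma) : seq Gamma :=
  match s with
  | [::] => [::]
  | a :: s' => fsm_out z a :: out_from (fsm_delta z a) s'
  end.

Definition outM (Sigma Gamma : finType) (M : fsm Sigma Gamma) (s : seq Sigma)
  : seq Gamma := out_from (fsm_start M) s.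

(* The finite set of machines is given as an injective family M : I -> fsm.
   DS(M): sequences on which two machines of the family differ. *)
Definition DS (Sigma Gamma I : finType) (M : I -> fsm Sigma Gamma)
    (s : seq Sigma) : bool :=
  [exists i : I, exists j : I, outM (M i) s != outM (M j) s].

(* A (randomized, adaptive) verifier with random tape r : Omega.
   Each round, given the history of (query, answer) pairs, it either submits
   a new input sequence to the challenge machine (after a reset, i.e. from the
   start state) or stops; at most v_rounds queries are made; then it decides. *)
Record verifier (Sigma Gamma Omega : finType) := Verifier {
  v_rounds : nat;
  v_next   : Omega -> seq (seq Sigma * seq Gamma) -> option (seq Sigma);
  v_decide : Omega -> seq (seq Sigma * seq Gamma) -> bool }.

Fixpoint run_aux (Sigma Gamma Omega : finType) (V : verifier Sigma Gamma Omega)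
    (M : fsm Sigma Gamma) (r : Omega) (fuel : nat)
    (hist : seq (seq Sigma * seq Gamma)) : seq (seq Sigma) * bool :=
  match fuel with
  | 0 => ([::], v_decide V r hist)
  | n.+1 =>
    match v_next V r hist with
    | None => ([::], v_decide V r hist)
    | Some s =>
        let res := run_aux V M r n (rcons hist (s, outM M s)) in
        (s :: res.1, res.2)
    end
  end.

Definition run (Sigma Gamma Omega : finType) (V : verifier Sigma Gamma Omega)
    (M : fsm Sigma Gamma) (r : Omega) : seq (seq Sigma) * bool :=
  run_aux V M r (v_rounds V) [::].

Definition queries (Sigma Gamma Omega : finType) (V : verifier Sigma Gamma Omega)
    (M : fsm Sigma Gamma) (r : Omega) : seq (seq Sigma) := (run V M r).1.

Definition decision (Sigma Gamma Omega : finType) (V : verifier Sigma Gamma Omega)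
    (M : fsm Sigma Gamma) (r : Omega) : bool := (run V M r).2.

Definition is_distr (R : realType) (Omega : finType) (P : Omega -> R) : Prop :=
  (forall r, 0 <= P r) /\ \sum_(r : Omega) P r = 1.

Definition Pr_accept (R : realType) (Sigma Gamma Omega : finType)
    (P : Omega -> R) (V : verifier Sigma Gamma Omega) (M : fsm Sigma Gamma) : R :=
  \sum_(r : Omega | decision V M r) P r.

Definition RSI_correct (R : realType) (Sigma Gamma Omega : finType)
    (P : Omega -> R) (V : verifier Sigma Gamma Omega) (Mtrg : fsm Sigma Gamma)
  : Prop := Pr_accept P V Mtrg = 1.

(* M_chl = M_src = M i for any i with M i <> M trg (i.e. i <> trg). *)
Definition RSI_sound (R : realType) (Sigma Gamma Omega I : finType)
    (P : Omega -> R) (V : verifier Sigma Gamma Omega) (M : I -> fsm Sigma Gamma)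
    (trg : I) (eps0 : R) : Prop :=
  forall i : I, i != trg -> Pr_accept P V (M i) <= eps0.

(* V' runs V on the same random tape, but answers itself every query on which
   all machines of the family agree (their common answer is that of the target
   machine) and forwards only the distinguishing ones. Since a verifier only
   sees its own history, V' rebuilds the history of V at each step by replaying
   V, taking the answers to the forwarded queries from its own history in
   order. Every run of V' then has the same decision as the corresponding run
   of V, so correctness and soundness carry over verbatim. *)
From mathcomp Require Import all_boot all_order all_algebra.
From mathcomp Require Import reals.
Set Implicit Arguments. Unset Strict Implicit. Unset Printing Implicit Defensive.
Import Order.TTheory GRing.Theory Num.Theory.
Local Open Scope ring_scope.

Section FilterVerifier.
Variables (Sigma Gamma Omega : finType) (V : verifier Sigma Gamma Omega).
Variables (keep : pred (seq Sigma)) (answer : seq Sigma -> seq Gamma).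

Local Notation history := (seq (seq Sigma * seq Gamma)).

(* [replay r f h hs] continues a run of V from history h with fuel f, taking
   the answers to kept queries from hs; it returns the next kept query not yet
   answered in hs (if any) together with the history of V reached. *)
Fixpoint replay (r : Omega) (fuel : nat) (h hs : history)
  : option (seq Sigma) * history :=
  match fuel with
  | 0 => (None, h)
  | n.+1 =>
    match v_next V r h with
    | None => (None, h)
    | Some s =>
      if keep s then
        match hs with
        | [::] => (Some s, h)
        | (_, a) :: hs' => replay r n (rcons h (s, a)) hs'
        end
      else replay r n (rcons h (s, answer s)) hs
    end
  end.

Definition filter_verifier : verifier Sigma Gamma Omega :=
  Verifier (v_rounds V)
    (fun r h' => (replay r (v_rounds V) [::] h').1)
    (fun r h' => v_decide V r (replay r (v_rounds V) [::] h').2).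

(* After the filtered verifier has seen h', replaying V has reached the
   history h of V with fuel f left, whatever answers come next. *)
Definition replays_to (r : Omega) (h' : history) (f : nat) (h : history) :=
  forall hs, replay r (v_rounds V) [::] (h' ++ hs) = replay r f h hs.

Variable Mc : fsm Sigma Gamma.
Hypothesis answer_Mc : forall s, ~~ keep s -> outM Mc s = answer s.

Lemma run_aux_filter_verifier r f : forall f' h h',
  (f <= f')%N -> replays_to r h' f h ->
  run_aux filter_verifier Mc r f' h' =
  ([seq s <- (run_aux V Mc r f h).1 | keep s], (run_aux V Mc r f h).2).
Proof.
elim: f => [|f IHf] f' h h' le_ff' rep.
  have /= replay_h' := rep [::]; rewrite cats0 in replay_h'.
  by case: f' le_ff' => [|f'] _ /=; rewrite replay_h'.
have /= replay_h' := rep [::]; rewrite cats0 in replay_h'.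
case next_h: (v_next V r h) => [s|]; rewrite next_h in replay_h'; last first.
  by case: f' le_ff' => [|f'] _ /=; rewrite replay_h'.
have [keep_s|skip_s] := boolP (keep s); rewrite ?keep_s ?(negbTE skip_s) in replay_h'.
- case: f' le_ff' => [|f'] // le_ff' /=; rewrite replay_h' /= keep_s.
  rewrite (IHf f' (rcons h (s, outM Mc s))) // => hs.
  by rewrite -cats1 -catA cat1s rep /= next_h keep_s.
- rewrite /= (negbTE skip_s) answer_Mc //.
  apply: IHf; first exact: ltnW.
  by move=> hs; rewrite rep /= next_h (negbTE skip_s).
Qed.

Lemma run_filter_verifier r :
  run filter_verifier Mc r = ([seq s <- queries V Mc r | keep s], decision V Mc r).
Proof. exact: run_aux_filter_verifier. Qed.

End FilterVerifier.

Lemma eq_Pr_accept (R : realType) (Sigma Gamma Omega : finType) (P : Omega -> R)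
    (V1 V2 : verifier Sigma Gamma Omega) (Mc : fsm Sigma Gamma) :
  decision V1 Mc =1 decision V2 Mc -> Pr_accept P V1 Mc = Pr_accept P V2 Mc.
Proof. by move=> eq_dec; apply: eq_bigl => r; rewrite eq_dec. Qed.

Lemma outM_notDS (Sigma Gamma I : finType) (M : I -> fsm Sigma Gamma) s i j :
  ~~ DS M s -> outM (M i) s = outM (M j) s.
Proof. by move=> /existsPn/(_ i)/existsPn/(_ j)/negbNE/eqP. Qed.

Theorem theorem1 (Sigma Gamma I Omega : finType) (R : realType)
    (M : I -> fsm Sigma Gamma) (trg : I) (P : Omega -> R) (eps0 : R)
    (V : verifier Sigma Gamma Omega) :
  injective M -> (1 < #|I|)%N -> is_distr P ->
  RSI_correct P V (M trg) -> RSI_sound P V M trg eps0 ->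
  exists V' : verifier Sigma Gamma Omega,
    [/\ RSI_correct P V' (M trg),
        RSI_sound P V' M trg eps0,
        (forall (i : I) (r : Omega),
           decision V' (M i) r = decision V (M i) r /\
           queries V' (M i) r = [seq s <- queries V (M i) r | DS M s]) &
        (forall (i : I) (r : Omega) (s : seq Sigma),
           s \in queries V' (M i) r -> DS M s)].
Proof.
move=> _ _ _ correct_V sound_V.
pose V' := filter_verifier V (DS M) (outM (M trg)).
have run_V' i r : run V' (M i) r = ([seq s <- queries V (M i) r | DS M s],
                                     decision V (M i) r).
  by apply: run_filter_verifier => s; apply: outM_notDS.
have decision_V' i : decision V' (M i) =1 decision V (M i).
  by move=> r; rewrite /decision run_V'.
exists V'; split.
- by rewrite /RSI_correct (eq_Pr_accept _ (decision_V' trg)).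
- by move=> i ne_i_trg; rewrite (eq_Pr_accept _ (decision_V' i)); apply: sound_V.
- by move=> i r; rewrite /queries run_V' decision_V'.
- by move=> i r s; rewrite /queries run_V' mem_filter => /andP[].
Qed.
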